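(* Let $p\in\mathcal M_1^+$ with generating function $\psi(z)=\sum_{k\ge0}p_kz^k$, and let $\mathcal R_1(\psi)(z)=\sum_{k\ge0}\mathcal R_1(p)_kz^k$, where $\mathcal R_1(p)_i=\sum_{k,\ell\ge0,\ k+\ell\ge i}\frac{1+\min\{k,\ell,i,k+\ell-i\}}{(k+1)(\ell+1)}p_kp_\ell$. Then the radii of convergence satisfy $\rho(\mathcal R_1(\psi))\ge\rho(\psi)$.
   Context: $\mathcal M_1^+$ is the set of probability measures on $\mathbb N_0$, identified with nonnegative sequences summing to $1$. $\rho(f)$ denotes the radius of convergence of a power series $f$ around $0$. *)

From Stdlib Require Import Reals Arith.
From Coquelicot Require Import Coquelicot.
Open Scope R_scope.

(* p in M_1^+ : a probability measure on N_0, i.e. a nonnegative sequence summing to 1 *)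
Definition prob_seq (p : nat -> R) : Prop :=
  (forall k, 0 <= p k) /\ is_series p 1.

Definition R1_term (p : nat -> R) (i k l : nat) : R :=
  if (i <=? k + l)%nat then
    (1 + INR (Nat.min (Nat.min k l) (Nat.min i (k + l - i)))) /
      (INR (k + 1) * INR (l + 1)) * p k * p l
  else 0.

(* R_1(p)_i (R1coef) = sum over k,l >= 0 with k + l >= i (nonnegative terms, iterated sum) *)
Definition R1coef (p : nat -> R) (i : nat) : R :=
  Series (fun k => Series (fun l => R1_term p i k l)).

From Stdlib Require Import Reals Lra Lia.
From Coquelicot Require Import Coquelicot.

(* The weight (1 + min{k, l, i, k+l-i}) / ((k+1)(l+1)) is at most 1, and the
   (k, l) term of R_1(p)_i vanishes unless i <= k + l.  Hence for r >= 1,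
   r^i R_1(p)_i <= sum_{k,l} p_k r^k p_l r^l = psi(r)^2, so the coefficients of
   R_1(psi) times r^i stay bounded whenever psi(r) converges. *)

Lemma Series_ge_0 (a : nat -> R) :
  (forall n, 0 <= a n) -> ex_series a -> 0 <= Series a.
Proof.
  intros a_ge0 a_ex.
  rewrite <- (Rmult_0_l (Series a)), <- Series_scal_l.
  apply Series_le; [intros n; specialize (a_ge0 n); lra | exact a_ex].
Qed.

Lemma ex_series_le_ge_0 (a b : nat -> R) :
  (forall n, 0 <= a n <= b n) -> ex_series b -> ex_series a.
Proof.
  intros ab b_ex. apply (ex_series_le a b); [| exact b_ex].
  intros n. change (Rabs (a n) <= b n). rewrite Rabs_pos_eq; apply ab.
Qed.

Lemma Series_Series_le_mult (f : nat -> nat -> R) (a b : nat -> R) :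
  (forall n, 0 <= a n) -> (forall n, 0 <= b n) -> ex_series a -> ex_series b ->
  (forall k l, 0 <= f k l <= a k * b l) ->
  0 <= Series (fun k => Series (f k)) <= Series a * Series b.
Proof.
  intros a_ge0 b_ge0 a_ex b_ex f_le.
  assert (inner : forall k, 0 <= Series (f k) <= a k * Series b).
  { intros k.
    assert (akb_ex : ex_series (fun l => a k * b l)) by exact (ex_series_scal_l _ _ b_ex).
    split.
    - apply Series_ge_0; [apply f_le | exact (ex_series_le_ge_0 _ _ (f_le k) akb_ex)].
    - rewrite <- Series_scal_l. apply Series_le; [apply f_le | exact akb_ex]. }
  assert (aSb_ex : ex_series (fun k => a k * Series b)) by exact (ex_series_scal_r _ _ a_ex).
  split.
  - apply Series_ge_0; [apply inner | exact (ex_series_le_ge_0 _ _ inner aSb_ex)].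
  - rewrite <- Series_scal_r. apply Series_le; [apply inner | exact aSb_ex].
Qed.

Lemma R1_weight_le_1 (k l m : nat) :
  (m <= k)%nat -> 0 <= (1 + INR m) / (INR (k + 1) * INR (l + 1)) <= 1.
Proof.
  intros m_le_k. apply le_INR in m_le_k.
  assert (k_ge0 := pos_INR k). assert (l_ge0 := pos_INR l). assert (m_ge0 := pos_INR m).
  rewrite !plus_INR. simpl INR.
  split.
  - apply Rdiv_le_0_compat; nra.
  - apply Rmult_le_reg_r with ((INR k + 1) * (INR l + 1)); [nra |].
    unfold Rdiv. rewrite Rmult_assoc, Rinv_l by nra. nra.
Qed.

Lemma R1_term_le (p : nat -> R) (r : R) (i k l : nat) :
  (forall n, 0 <= p n) -> 1 <= r ->
  0 <= R1_term p i k l <= (/ r ^ i * (p k * r ^ k)) * (p l * r ^ l).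
Proof.
  intros p_ge0 r_ge1.
  assert (pk_ge0 := p_ge0 k). assert (pl_ge0 := p_ge0 l).
  assert (ri_gt0 : 0 < r ^ i) by (apply pow_lt; lra).
  assert (rk_ge1 : 1 <= r ^ k) by (apply pow_R1_Rle; lra).
  assert (rl_ge1 : 1 <= r ^ l) by (apply pow_R1_Rle; lra).
  assert (bound_ge0 : 0 <= (/ r ^ i * (p k * r ^ k)) * (p l * r ^ l)).
  { apply Rmult_le_pos; [apply Rmult_le_pos |]; try apply Rlt_le, Rinv_0_lt_compat; nra. }
  unfold R1_term. destruct (Nat.leb_spec i (k + l)) as [i_le | i_gt]; [| lra].
  destruct (R1_weight_le_1 k l (Nat.min (Nat.min k l) (Nat.min i (k + l - i))))
    as [w_ge0 w_le1]; [lia |].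
  set (w := (1 + _) / _) in w_ge0, w_le1 |- *.
  assert (ri_le : r ^ i <= r ^ k * r ^ l) by (rewrite <- pow_add; apply Rle_pow; auto).
  assert (pkl_le : p k * p l <= (/ r ^ i * (p k * r ^ k)) * (p l * r ^ l)).
  { apply (Rmult_le_reg_l (r ^ i)); [exact ri_gt0 |].
    replace (r ^ i * (/ r ^ i * (p k * r ^ k) * (p l * r ^ l)))
      with (p k * p l * (r ^ k * r ^ l)) by (field; lra).
    rewrite (Rmult_comm (r ^ i)). apply Rmult_le_compat_l; nra. }
  assert (pkl_ge0 : 0 <= p k * p l) by nra.
  assert (weighted : 0 <= w * (p k * p l) <= p k * p l) by (split; nra).
  rewrite Rmult_assoc. lra.
Qed.

Lemma R1coef_mul_pow_le (p : nat -> R) (r : R) (i : nat) :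
  (forall n, 0 <= p n) -> 1 <= r -> ex_series (fun k => p k * r ^ k) ->
  0 <= R1coef p i * r ^ i <= Series (fun k => p k * r ^ k) ^ 2.
Proof.
  intros p_ge0 r_ge1 psi_r_ex.
  assert (ri_gt0 : 0 < r ^ i) by (apply pow_lt; lra).
  assert (terms_ge0 : forall k, 0 <= p k * r ^ k)
    by (intros k; apply Rmult_le_pos; [auto | apply pow_le; lra]).
  destruct (Series_Series_le_mult (R1_term p i) (fun k => / r ^ i * (p k * r ^ k))
              (fun k => p k * r ^ k)) as [coef_ge0 coef_le]; auto.
  - intros k. apply Rmult_le_pos; [apply Rlt_le, Rinv_0_lt_compat; lra | auto].
  - exact (ex_series_scal_l (/ r ^ i) _ psi_r_ex).
  - intros k l. exact (R1_term_le p r i k l p_ge0 r_ge1).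
  - change (Series (fun k => Series (R1_term p i k))) with (R1coef p i)
      in coef_ge0, coef_le.
    rewrite Series_scal_l in coef_le.
    set (psi_r := Series (fun k => p k * r ^ k)) in coef_le |- *.
    split; [nra |].
    apply (Rmult_le_compat_r (r ^ i)) in coef_le; [| lra].
    replace (/ r ^ i * psi_r * psi_r * r ^ i) with (psi_r ^ 2) in coef_le by (field; lra).
    exact coef_le.
Qed.

Lemma CV_radius_R1coef_ge (p : nat -> R) (r : R) :
  (forall n, 0 <= p n) -> 1 <= r -> ex_series (fun k => p k * r ^ k) ->
  Rbar_le r (CV_radius (R1coef p)).
Proof.
  intros p_ge0 r_ge1 psi_r_ex.
  apply (proj1 (CV_radius_bounded (R1coef p))).
  exists (Series (fun k => p k * r ^ k) ^ 2). intros n.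
  destruct (R1coef_mul_pow_le p r n p_ge0 r_ge1 psi_r_ex) as [coef_ge0 coef_le].
  rewrite Rabs_pos_eq; assumption.
Qed.

Lemma Rbar_le_of_lt_le (a b : Rbar) :
  (forall x : R, Rbar_lt x a -> Rbar_le x b) -> Rbar_le a b.
Proof.
  intros lt_le. destruct (Rbar_le_lt_dec a b) as [a_le_b | b_lt_a]; [exact a_le_b |].
  exfalso. destruct a as [z | |], b as [y | |]; simpl in b_lt_a; try contradiction.
  - specialize (lt_le ((y + z) / 2)). simpl in lt_le. lra.
  - specialize (lt_le (z - 1)). simpl in lt_le. apply lt_le. lra.
  - specialize (lt_le (y + 1)). simpl in lt_le. lra.
  - exact (lt_le 0 I).
Qed.

Theorem lemma7 (p : nat -> R) (hp : prob_seq p) :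
  Rbar_le (CV_radius p) (CV_radius (R1coef p)).
Proof.
  destruct hp as [p_ge0 p_sum].
  apply Rbar_le_of_lt_le. intros x x_lt.
  destruct (Rle_lt_dec x 1) as [x_le1 | x_gt1].
  - apply Rbar_le_trans with (Finite 1); [exact x_le1 |].
    apply CV_radius_R1coef_ge; [exact p_ge0 | lra |].
    apply (ex_series_ext p); [| exists 1; exact p_sum].
    intros n. rewrite pow1, Rmult_1_r. reflexivity.
  - apply CV_radius_R1coef_ge; [exact p_ge0 | lra |].
    apply ex_series_Rabs, CV_disk_inside.
    rewrite Rabs_pos_eq by lra. exact x_lt.
Qed.
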